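(* Let $n\in\mathbb N$, let $W,W',M,M'$ be pairwise disjoint sets each of cardinality $n$, and let $w\in W$, $m'\in M'$. There exist functions $\succ_{W\cup W'}:\mathcal P(W,M)\to\mathcal F(W\cup W',M\cup M')$ and $\succ_{M\cup M'}:\mathcal P(M,W)\to\mathcal F(M\cup M',W\cup W')$ such that for every $\succ_W\in\mathcal P(W,M)$ and $\succ_M\in\mathcal P(M,W)$ the following are equivalent: (1) $w$ is single in some marriage between $W$ and $M$ that is stable with respect to $\succ_W,\succ_M$; (2) $w$ and $m'$ are married in some marriage between $W\cup W'$ and $M\cup M'$ that is stable with respect to $\succ_{W\cup W'}(\succ_W)$ and $\succ_{M\cup M'}(\succ_M)$; (3) $w$ and $m'$ are married in every marriage between $W\cup W'$ and $M\cup M'$ that is stable with respect to $\succ_{W\cup W'}(\succ_W)$ and $\succ_{M\cup M'}(\succ_M)$.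
   Context: $\mathcal P(A,B)$ is the set of profiles assigning to each $a\in A$ a preference list, i.e. a totally ordered subset of $B$ (others unacceptable); $\mathcal F(A,B)\subseteq\mathcal P(A,B)$ consists of profiles in which every list contains all of $B$. A participant prefers $x$ over $x'$ if $x$ precedes $x'$ on their list, or $x$ is on the list and $x'$ is not (being single counts as being matched to someone off the list). A marriage is a one-to-one map between a subset of the women and a subset of the men; unmatched participants are single. A marriage is stable if every married participant is married to someone on their list and there is no blocking pair $(w,m)$ where $w$ prefers $m$ to her current situation and $m$ prefers $w$ to his. *)

From mathcomp Require Import all_boot.
Set Implicit Arguments. Unset Strict Implicit. Unset Printing Implicit Defensive.

Section Marriage.
Variables A B : finType.

(* A preference profile assigns to each a : A a preference list: a
   duplicate-free sequence of elements of B (earlier = more preferred);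
   elements of B not on the list are unacceptable. *)
Definition is_profile (p : A -> seq B) : Prop := forall a, uniq (p a).

Definition is_full_profile (p : A -> seq B) : Prop :=
  is_profile p /\ forall a b, b \in p a.

(* a prefers x over x' (None = being single, which counts as being matched
   to someone off the list). *)
Definition prefers (p : A -> seq B) (a : A) (x x' : option B) : bool :=
  match x with
  | None => false
  | Some b =>
      (b \in p a) &&
      match x' with
      | None => true
      | Some b' => index b (p a) < index b' (p a)
      end
  end.
End Marriage.

Section Matching.
Variables Wo Me : finType.

Definition is_marriage (mu : Wo -> option Me) : Prop :=
  forall w1 w2 m, mu w1 = Some m -> mu w2 = Some m -> w1 = w2.

Definition partner (mu : Wo -> option Me) (m : Me) : option Wo :=
  [pick w | mu w == Some m].

Definition is_stable (pW : Wo -> seq Me) (pM : Me -> seq Wo)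
    (mu : Wo -> option Me) : Prop :=
  is_marriage mu /\
  (forall w m, mu w = Some m -> (m \in pW w) /\ (w \in pM m)) /\
  (forall w m, ~ (prefers pW w (Some m) (mu w) &&
                  prefers pM m (Some w) (partner mu m))).
End Matching.

From mathcomp Require Import all_boot perm zify.
From Stdlib Require Import Classical.
Set Implicit Arguments. Unset Strict Implicit. Unset Printing Implicit Defensive.

(* Embed the instance (W, M) into (W + W', M + M') so that every x in W ranks
   a private man [d x] of M' right after her list, every man y of M ranks a
   private woman [e y] of W' right after his list, and each private agent
   ranks its owner first.  In a stable marriage of the big instance every x in
   W is then matched either within her list or to [d x], and the restriction
   to W and M is stable for the original profiles.  Hence (2) -> (1); the rural
   hospitals theorem (the set of single agents is the same in all stable
   marriages) gives (1) -> (3); and (3) -> (2) because stable marriages exist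
   (deferred acceptance), with [d w = m']. *)

Section Partner.
Variables Wo Me : finType.
Implicit Types mu : Wo -> option Me.

Lemma partner_match mu m x : partner mu m = Some x -> mu x = Some m.
Proof. by rewrite /partner; case: pickP => // y /eqP mu_y [<-]. Qed.

Lemma match_partner mu m x :
  is_marriage mu -> mu x = Some m -> partner mu m = Some x.
Proof.
move=> mu_marriage mu_x; rewrite /partner; case: pickP => [y /eqP mu_y|none].
  by rewrite (mu_marriage _ _ _ mu_y mu_x).
by move: (none x); rewrite mu_x eqxx.
Qed.

End Partner.

Lemma partner_marriage (Wo Me : finType) (f : Me -> option Wo) :
  is_marriage (partner f).
Proof.
move=> x1 x2 m /partner_match f_x1 /partner_match f_x2.
by move: f_x1; rewrite f_x2 => -[].
Qed.

Section Prefers.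
Variables (A B : finType) (p : A -> seq B) (a : A).

Lemma prefers_trans b1 b2 b3 :
  prefers p a (Some b1) (Some b2) -> prefers p a (Some b2) (Some b3) ->
  prefers p a (Some b1) (Some b3).
Proof.
by move=> /andP[b1_in lt12] /andP[_ lt23]; rewrite /= b1_in (ltn_trans lt12).
Qed.

Lemma prefers_irrefl b : ~~ prefers p a (Some b) (Some b).
Proof. by rewrite /= ltnn andbF. Qed.

Lemma prefers_total b u :
  b \in p a -> u <> Some b -> (forall c, u = Some c -> c \in p a) ->
  ~~ prefers p a (Some b) u -> prefers p a u (Some b).
Proof.
case: u => [c|] b_in c_neq c_in /=; last by rewrite b_in.
have {}c_in := c_in c erefl; rewrite b_in c_in /= -leqNgt ltn_neqAle => ->.
rewrite andbT; apply/eqP => eq_index; apply: c_neq; congr Some.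
by rewrite -(nth_index b c_in) eq_index nth_index.
Qed.

End Prefers.

Section RuralHospitals.
Variables (Wo Me : finType) (pW : Wo -> seq Me) (pM : Me -> seq Wo).
Variables mu nu : Wo -> option Me.
Hypotheses (mu_stable : is_stable pW pM mu) (nu_stable : is_stable pW pM nu).

Let gain := [set x | prefers pW x (nu x) (mu x)].
Let loss := [set m | prefers pM m (partner mu m) (partner nu m)].

Lemma gain_loss x : x \in gain -> exists2 m, nu x = Some m & m \in loss.
Proof.
have [_ [mu_ok mu_unblocked]] := mu_stable.
have [nu_marriage [nu_ok _]] := nu_stable.
rewrite inE; case nu_x: (nu x) => [m|] //= /andP[m_in pref].
exists m => //; rewrite inE (match_partner nu_marriage nu_x).
apply: prefers_total.
- exact: (proj2 (nu_ok _ _ nu_x)).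
- by move=> /partner_match mu_x; rewrite mu_x ltnn in pref.
- by move=> c /partner_match /mu_ok [].
- apply/negP => m_pref; apply: (mu_unblocked x m).
  by rewrite m_pref andbT /= m_in.
Qed.

Lemma loss_gain m : m \in loss -> exists2 x, partner mu m = Some x & x \in gain.
Proof.
have [_ [mu_ok _]] := mu_stable.
have [nu_marriage [nu_ok nu_unblocked]] := nu_stable.
rewrite inE; case mu_m: (partner mu m) => [x|] //= /andP[x_in pref].
exists x => //; have mu_x := partner_match mu_m; rewrite inE mu_x.
apply: prefers_total.
- exact: (proj1 (mu_ok _ _ mu_x)).
- by move=> /(match_partner nu_marriage) nu_m; rewrite nu_m ltnn in pref.
- by move=> c /nu_ok [].
- apply/negP => x_pref; apply: (nu_unblocked x m).
  by rewrite x_pref /= x_in.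
Qed.

(* [nu] injects [gain] into [loss] and [partner mu] injects [loss] into [gain],
   so by counting the latter is onto. *)
Lemma loss_onto_gain : Some @: gain \subset partner mu @: loss.
Proof.
have [mu_marriage _] := mu_stable; have [nu_marriage _] := nu_stable.
have nu_inj : {in gain &, injective nu}.
  move=> x1 x2 /gain_loss[m nu_x1 _] _ eq_nu.
  by apply: (nu_marriage _ _ m); rewrite -?eq_nu.
have mu_inj : {in loss &, injective (partner mu)}.
  move=> m1 m2 /loss_gain[x mu_m1 _] _; rewrite mu_m1 => /esym/partner_match.
  by rewrite (partner_match mu_m1) => -[].
have gain_le : #|gain| <= #|loss|.
  rewrite -(card_in_imset nu_inj) -(card_imset loss (@Some_inj _)).
  apply: subset_leq_card; apply/subsetP => _ /imsetP[x /gain_loss[m -> m_in] ->].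
  exact: imset_f.
have loss_sub : partner mu @: loss \subset Some @: gain.
  apply/subsetP => _ /imsetP[m /loss_gain[x -> x_in] ->]; exact: imset_f.
suff -> : partner mu @: loss = Some @: gain by [].
apply/eqP; rewrite eqEcard loss_sub (card_in_imset mu_inj) card_imset //.
exact: Some_inj.
Qed.

Lemma rural_hospitals x : mu x = None -> nu x = None.
Proof.
move=> mu_x; case nu_x: (nu x) => [m|] //; exfalso.
have [_ [nu_ok _]] := nu_stable.
have x_gain : x \in gain by rewrite inE nu_x mu_x /= (proj1 (nu_ok _ _ nu_x)).
have /imsetP[m' _ /esym/partner_match] :=
  subsetP loss_onto_gain _ (imset_f _ x_gain).
by rewrite mu_x.
Qed.

End RuralHospitals.

Lemma index_drop_head (T : eqType) (s : seq T) k y t x :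
  drop k s = y :: t -> x \in s -> x \notin take k s -> index y s <= index x s.
Proof.
move=> drop_s x_in x_notin; rewrite -(cat_take_drop k s) !index_cat (negbTE x_notin).
case: ifP => [y_in|_]; first by rewrite (leq_trans (ltnW _) (leq_addr _ _)) ?index_mem.
by rewrite drop_s /= eqxx addn0 leq_addr.
Qed.

(* Men-proposing deferred acceptance: [k m] counts the women who have already
   rejected the man [m]. *)
Section DeferredAcceptance.
Variables (Wo Me : finType) (pW : Wo -> seq Me) (pM : Me -> seq Wo).
Implicit Type k : Me -> nat.

Definition proposal k m : option Wo := ohead (drop (k m) (pM m)).

Definition holds_better k x m :=
  exists2 m2, proposal k m2 = Some x & prefers pW x (Some m2) (Some m).

Definition rejections_justified k :=
  forall m x, x \in take (k m) (pM m) -> m \in pW x -> holds_better k x m.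

Definition rejects k m x := proposal k m = Some x /\ (m \in pW x -> holds_better k x m).

Definition advance k m i := if i == m then (k m).+1 else k i.

Definition pending k := \sum_m (size (pM m) - k m).

Lemma proposal_mem k m x : proposal k m = Some x -> x \in pM m.
Proof.
rewrite /proposal; case drop_m: (drop (k m) (pM m)) => [|y s] //= [<-].
by rewrite -(cat_take_drop (k m) (pM m)) mem_cat drop_m mem_head orbT.
Qed.

Lemma proposal_advance k m i : i != m -> proposal (advance k m) i = proposal k i.
Proof. by move=> /negbTE i_neq; rewrite /proposal /advance i_neq. Qed.

Lemma take_advance k m x :
  proposal k m = Some x -> take (advance k m m) (pM m) = rcons (take (k m) (pM m)) x.
Proof.
rewrite /proposal /advance eqxx -addn1 takeD -cats1.
by case: (drop (k m) (pM m)) => [|y s] //= [->]; rewrite take0.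
Qed.

Lemma holds_better_advance k m x y m' :
  rejects k m x -> holds_better k y m' -> holds_better (advance k m) y m'.
Proof.
move=> [prop_m m_rejected] [m2 prop_m2 pref].
case: (eqVneq m2 m) => [eq_m2|m2_neq]; last by exists m2; rewrite ?proposal_advance.
subst m2; move: prop_m2 pref; rewrite prop_m => -[<-] {y} pref.
have [m3 prop_m3 pref3] := m_rejected (proj1 (andP pref)).
have m3_neq : m3 != m by apply: contraTneq pref3 => ->; exact: prefers_irrefl.
by exists m3; rewrite ?proposal_advance // (prefers_trans pref3).
Qed.

Lemma advance_justified k m x :
  rejections_justified k -> rejects k m x -> rejections_justified (advance k m).
Proof.
move=> justified rejection m' x' x'_in m'_in.
apply: (holds_better_advance rejection).
case: (eqVneq m' m) => [eq_m'|m'_neq]; last first.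
  by apply: justified m'_in; rewrite /advance (negbTE m'_neq) in x'_in.
subst m'; have [prop_m m_rejected] := rejection.
move: x'_in; rewrite (take_advance prop_m) mem_rcons inE.
case/orP => [/eqP eq_x' | x'_old]; first by subst x'; exact: m_rejected.
exact: justified x'_old m'_in.
Qed.

Lemma pending_advance k m x :
  proposal k m = Some x -> pending (advance k m) < pending k.
Proof.
move=> prop_m; have : 0 < size (drop (k m) (pM m)).
  by move: prop_m; rewrite /proposal; case: drop.
rewrite size_drop subn_gt0 => lt_m.
rewrite /pending (bigD1 m) //= [X in _ < X](bigD1 m) //= {1}/advance eqxx.
rewrite (eq_bigr (fun i => size (pM i) - k i)); last first.
  by move=> i /negbTE; rewrite /advance => ->.
by rewrite ltn_add2r; lia.
Qed.

Section NoRejection.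
Variable k : Me -> nat.
Hypotheses (justified : rejections_justified k)
  (no_rejection : forall m x, ~ rejects k m x).

Lemma proposal_acceptable m x : proposal k m = Some x -> m \in pW x.
Proof.
move=> prop_m; have [//|m_out] := boolP (m \in pW x).
by case: (@no_rejection m x); split=> // m_in; rewrite m_in in m_out.
Qed.

Lemma proposal_best m x : proposal k m = Some x -> ~ holds_better k x m.
Proof. by move=> prop_m better; apply: (@no_rejection m x). Qed.

Lemma proposal_marriage : is_marriage (proposal k).
Proof.
move=> m1 m2 x prop1 prop2; apply: NNPP => m_neq.
apply: (proposal_best prop1); exists m2 => //.
apply: prefers_total; rewrite ?(proposal_acceptable prop1) //.
- by move=> [/esym].
- by move=> _ [<-]; rewrite (proposal_acceptable prop2).
- by apply/negP => pref; apply: (proposal_best prop2); exists m1.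
Qed.

Lemma stable_proposals : is_stable pW pM (partner (proposal k)).
Proof.
set mu := partner (proposal k).
have mu_prop m x : proposal k m = Some x -> mu x = Some m.
  exact: match_partner proposal_marriage.
have mu_marriage : is_marriage mu by apply: partner_marriage.
split=> //.
split=> [x m /partner_match prop_m|x m /andP[pref_x /andP[x_in pref_m]]].
  by rewrite (proposal_acceptable prop_m) (proposal_mem prop_m).
have [x_old|x_new] := boolP (x \in take (k m) (pM m)).
  have [m2 prop_m2 pref2] := justified x_old (proj1 (andP pref_x)).
  rewrite (mu_prop _ _ prop_m2) in pref_x.
  by have := prefers_trans pref_x pref2; rewrite (negbTE (prefers_irrefl _ _ _)).
case drop_m: (drop (k m) (pM m)) => [|y t].
  by move: x_in; rewrite -(cat_take_drop (k m) (pM m)) drop_m cats0 (negbTE x_new).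
have prop_m : proposal k m = Some y by rewrite /proposal drop_m.
move: pref_m; rewrite (match_partner mu_marriage (mu_prop _ _ prop_m)) /=.
by rewrite ltnNge (index_drop_head drop_m x_in x_new).
Qed.

End NoRejection.

Theorem exists_stable : exists mu, is_stable pW pM mu.
Proof.
suff: forall N k, pending k = N -> rejections_justified k -> exists mu, is_stable pW pM mu.
  by move/(_ _ (fun=> 0) erefl); apply=> m x; rewrite take0.
elim/ltn_ind=> N IH k pending_k justified.
case: (classic (exists m x, rejects k m x)) => [[m [x rejection]]|none].
  apply: (IH (pending (advance k m))) (advance_justified justified rejection) => //.
  by rewrite -pending_k; apply: pending_advance (proj1 rejection).
exists (partner (proposal k)); apply: stable_proposals justified _.
by move=> m x rejection; apply: none; exists m, x.
Qed.

End DeferredAcceptance.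

Definition complete_list (T : finType) (s : seq T) : seq T :=
  s ++ [seq u <- enum T | u \notin s].

Lemma complete_list_uniq (T : finType) (s : seq T) : uniq s -> uniq (complete_list s).
Proof.
move=> s_uniq; rewrite cat_uniq s_uniq filter_uniq ?enum_uniq // andbT.
by apply/hasP => -[u]; rewrite mem_filter => /andP[/negbTE->].
Qed.

Lemma mem_complete_list (T : finType) (s : seq T) u : u \in complete_list s.
Proof. by rewrite mem_cat mem_filter mem_enum andbT; case: (u \in s). Qed.

Lemma prefers_complete_list (A B : finType) (p : A -> seq B) a s b u :
  p a = complete_list s -> b \in s ->
  (forall c, u = Some c -> c \in s -> index b s < index c s) ->
  prefers p a (Some b) u.
Proof.
move=> p_a b_in earlier; rewrite /= p_a mem_complete_list.
case: u earlier => [c|] // earlier; rewrite !index_cat b_in.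
case: ifP => [c_in|_]; first exact: earlier.
by rewrite (leq_trans _ (leq_addr _ _)) ?index_mem.
Qed.

Lemma prefers_complete_top (A B : finType) (p : A -> seq B) a b u :
  p a = complete_list [:: b] -> u <> Some b -> prefers p a (Some b) u.
Proof.
move=> p_a u_neq; apply: prefers_complete_list p_a _ _; first exact: mem_head.
by move=> c u_c; rewrite inE => /eqP c_b; case: u_neq; rewrite u_c c_b.
Qed.

Definition extend_list (A C : eqType) (s : seq A) (c : C) : seq (A + C) :=
  map inl s ++ [:: inr c].

Section ExtendList.
Variables (A C : eqType) (s : seq A) (c : C).

Lemma extend_list_uniq : uniq s -> uniq (extend_list s c).
Proof.
move=> s_uniq; rewrite cat_uniq map_inj_uniq //=; last by move=> ? ? [].
by rewrite s_uniq andbT orbF; apply/mapP => -[].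
Qed.

Lemma extend_listP u :
  u \in extend_list s c -> u = inr c \/ exists2 a, u = inl a & a \in s.
Proof.
rewrite mem_cat inE => /orP[/mapP[a a_in ->]|/eqP->]; last by left.
by right; exists a.
Qed.

Lemma index_extend_list_inl a : a \in s -> index (inl a) (extend_list s c) = index a s.
Proof. by move=> a_in; rewrite index_cat map_f // index_map //; move=> ? ? []. Qed.

Lemma index_extend_list_inr : index (inr c) (extend_list s c) = size s.
Proof.
rewrite index_cat; case: ifP => [/mapP[] //|_].
by rewrite size_map /= eqxx addn0.
Qed.

End ExtendList.

Lemma pick_inj (A B : finType) (f : A -> B) a :
  injective f -> [pick x | f x == f a] = Some a.
Proof.
move=> f_inj; case: pickP => [x /eqP/f_inj-> //|none].
by move: (none a); rewrite eqxx.
Qed.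

Section Embedding.
Variables (W W' M M' : finType) (d : W -> M') (e : M -> W').

Definition embedW (pW : W -> seq M) (x : W + W') : seq (M + M') :=
  complete_list (match x with
    | inl x => extend_list (pW x) (d x)
    | inr x' => if [pick y | e y == x'] is Some y then [:: inl y] else [::]
    end).

Definition embedM (pM : M -> seq W) (y : M + M') : seq (W + W') :=
  complete_list (match y with
    | inl y => extend_list (pM y) (e y)
    | inr y' => if [pick x | d x == y'] is Some x then [:: inl x] else [::]
    end).

Lemma embedW_full pW : is_profile pW -> is_full_profile (embedW pW).
Proof.
move=> pW_profile; split=> [[x|x']|a b]; rewrite ?mem_complete_list //.
  exact/complete_list_uniq/extend_list_uniq.
by apply: complete_list_uniq; case: pickP.
Qed.

Lemma embedM_full pM : is_profile pM -> is_full_profile (embedM pM).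
Proof.
move=> pM_profile; split=> [[y|y']|a b]; rewrite ?mem_complete_list //.
  exact/complete_list_uniq/extend_list_uniq.
by apply: complete_list_uniq; case: pickP.
Qed.

Hypotheses (d_inj : injective d) (e_inj : injective e).
Variables (pW : W -> seq M) (pM : M -> seq W) (nu : W + W' -> option (M + M')).
Hypothesis nu_stable : is_stable (embedW pW) (embedM pM) nu.

(* Otherwise [x] and her private man [d x] would block [nu]. *)
Lemma embedded_woman_match x :
  nu (inl x) = Some (inr (d x)) \/ exists2 y, nu (inl x) = Some (inl y) & y \in pW x.
Proof.
have [_ [_ nu_unblocked]] := nu_stable.
apply: NNPP => unmatched; apply: (nu_unblocked (inl x) (inr (d x))); apply/andP; split.
  apply: (prefers_complete_list (s := extend_list (pW x) (d x))) => //.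
    by rewrite mem_cat mem_head orbT.
  move=> c nu_x /extend_listP[c_d|[y c_y y_in]]; case: unmatched.
    by left; rewrite nu_x c_d.
  by right; exists y; rewrite ?nu_x ?c_y.
apply: prefers_complete_top; first by rewrite /embedM /= pick_inj.
by move=> /partner_match nu_x; apply: unmatched; left.
Qed.

Lemma embedded_man_match y :
  partner nu (inl y) = Some (inr (e y)) \/
  exists2 x, partner nu (inl y) = Some (inl x) & x \in pM y.
Proof.
have [nu_marriage [_ nu_unblocked]] := nu_stable.
apply: NNPP => unmatched; apply: (nu_unblocked (inr (e y)) (inl y)); apply/andP; split.
  apply: prefers_complete_top; first by rewrite /embedW /= pick_inj.
  by move=> /(match_partner nu_marriage) nu_y; apply: unmatched; left.
apply: (prefers_complete_list (s := extend_list (pM y) (e y))) => //.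
  by rewrite mem_cat mem_head orbT.
move=> c nu_y /extend_listP[c_e|[x c_x x_in]]; case: unmatched.
  by left; rewrite nu_y c_e.
by right; exists x; rewrite ?nu_y ?c_x.
Qed.

Definition restrict x : option M := if nu (inl x) is Some (inl y) then Some y else None.

Lemma restrictE x y : restrict x = Some y <-> nu (inl x) = Some (inl y).
Proof. by rewrite /restrict; case: (nu (inl x)) => [[a|a]|]; split=> // -[->]. Qed.

Lemma restrict_None x : restrict x = None -> nu (inl x) = Some (inr (d x)).
Proof. by rewrite /restrict; case: (embedded_woman_match x) => [|[y]] ->. Qed.

Lemma restrict_marriage : is_marriage restrict.
Proof.
have [nu_marriage _] := nu_stable.
move=> x1 x2 y /restrictE nu_x1 /restrictE nu_x2.
by case: (nu_marriage _ _ _ nu_x1 nu_x2).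
Qed.

Lemma partner_restrict y x :
  partner nu (inl y) = Some (inl x) -> partner restrict y = Some x.
Proof. by move=> /partner_match/restrictE; apply: match_partner restrict_marriage. Qed.

Lemma prefers_restrict_W x y :
  prefers pW x (Some y) (restrict x) ->
  prefers (embedW pW) (inl x) (Some (inl y)) (nu (inl x)).
Proof.
move=> /andP[y_in pref].
apply: (prefers_complete_list (s := extend_list (pW x) (d x))) => //.
  by rewrite mem_cat map_f.
move=> c nu_x _; rewrite index_extend_list_inl //.
case: (embedded_woman_match x) => [|[y' + y'_in]]; rewrite nu_x => -[c_eq]; subst c.
  by rewrite index_extend_list_inr index_mem.
by rewrite index_extend_list_inl //; move: pref; rewrite /restrict nu_x.
Qed.

Lemma prefers_restrict_M y x :
  prefers pM y (Some x) (partner restrict y) ->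
  prefers (embedM pM) (inl y) (Some (inl x)) (partner nu (inl y)).
Proof.
move=> /andP[x_in pref].
apply: (prefers_complete_list (s := extend_list (pM y) (e y))) => //.
  by rewrite mem_cat map_f.
move=> c nu_y _; rewrite index_extend_list_inl //.
case: (embedded_man_match y) => [|[x' + x'_in]]; rewrite nu_y => -[c_eq]; subst c.
  by rewrite index_extend_list_inr index_mem.
rewrite index_extend_list_inl //.
by move: pref; rewrite (partner_restrict nu_y).
Qed.

Lemma restrict_stable : is_stable pW pM restrict.
Proof.
have [nu_marriage [_ nu_unblocked]] := nu_stable.
split; first exact: restrict_marriage.
split=> [x y /restrictE nu_x|x y /andP[pref_x pref_y]]; last first.
  by apply: (nu_unblocked (inl x) (inl y)); rewrite prefers_restrict_W ?prefers_restrict_M.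
split.
  by case: (embedded_woman_match x) => [|[y' +]]; rewrite nu_x // => -[->].
have nu_y := match_partner nu_marriage nu_x.
by case: (embedded_man_match y) => [|[x' +]]; rewrite nu_y // => -[->].
Qed.

End Embedding.

Lemma injection_of_card (A B : finType) : #|A| = #|B| -> exists f : A -> B, injective f.
Proof.
move=> eq_card; exists (fun x => enum_val (cast_ord eq_card (enum_rank x))).
by move=> x1 x2 /enum_val_inj/cast_ord_inj/enum_rank_inj.
Qed.

Lemma injection_with_value (A B : finType) a b :
  #|A| = #|B| -> exists2 f : A -> B, injective f & f a = b.
Proof.
move=> /injection_of_card[f f_inj]; exists (tperm (f a) b \o f); last exact: tpermL.
exact: inj_comp perm_inj f_inj.
Qed.

Theorem lemma23 (n : nat) (W W' M M' : finType)
  (hW : #|W| = n) (hW' : #|W'| = n) (hM : #|M| = n) (hM' : #|M'| = n)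
  (w : W) (m' : M') :
  exists (fW : (W -> seq M) -> (W + W' -> seq (M + M')%type))
         (fM : (M -> seq W) -> (M + M' -> seq (W + W')%type)),
    (forall pW, is_profile pW -> is_full_profile (fW pW)) /\
    (forall pM, is_profile pM -> is_full_profile (fM pM)) /\
    (forall (pW : W -> seq M) (pM : M -> seq W),
       is_profile pW -> is_profile pM ->
       let c1 := exists mu : W -> option M, is_stable pW pM mu /\ mu w = None in
       let c2 := exists mu : W + W' -> option (M + M')%type,
                   is_stable (fW pW) (fM pM) mu /\ mu (inl w) = Some (inr m') in
       let c3 := forall mu : W + W' -> option (M + M')%type,
                   is_stable (fW pW) (fM pM) mu -> mu (inl w) = Some (inr m') in
       (c1 <-> c2) /\ (c2 <-> c3)).
Proof.
have [d d_inj d_w] := injection_with_value w m' (etrans hW (esym hM')).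
have [e e_inj] := injection_of_card (etrans hM (esym hW')).
exists (embedW d e), (embedM d e).
split; first exact: embedW_full; split; first exact: embedM_full.
move=> pW pM _ _ c1 c2 c3.
have restrict_ok nu := @restrict_stable _ _ _ _ _ _ d_inj e_inj pW pM nu.
have c2_c1 : c2 -> c1.
  move=> [nu [nu_stable nu_w]]; exists (restrict nu).
  by split; [exact: restrict_ok | rewrite /restrict nu_w].
have c1_c3 : c1 -> c3.
  move=> [mu [mu_stable mu_w]] nu nu_stable; rewrite -d_w.
  apply: (restrict_None d_inj nu_stable).
  exact: rural_hospitals mu_stable (restrict_ok _ nu_stable) _ mu_w.
have c3_c2 : c3 -> c2.
  have [nu nu_stable] := exists_stable (embedW d e pW) (embedM d e pM).
  by move=> every_stable; exists nu; split; last exact: every_stable.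
split; split.
- by move/c1_c3/c3_c2.
- exact: c2_c1.
- by move/c2_c1/c1_c3.
- exact: c3_c2.
Qed.
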